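(* Let $\mathcal{X}_1,\mathcal{X}_2$ be non-empty sets, let $\mathcal{B}_1\subseteq\mathcal{P}(\mathcal{X}_1)\setminus\{\emptyset\}$ and $\mathcal{B}_2\subseteq\mathcal{P}(\mathcal{X}_2)\setminus\{\emptyset\}$, and for $i\in\{1,2\}$ let $\underline{P}_i$ be a coherent conditional lower prevision on a domain $\mathcal{C}_i\subseteq\mathcal{C}(\mathcal{X}_i)$. Let $\mathcal{C}\subseteq\mathcal{C}(\mathcal{X}_1\times\mathcal{X}_2)$ be an independent domain that contains $\mathcal{C}_1$ and $\mathcal{C}_2$. Then the independent natural extension of $\underline{P}_1$ and $\underline{P}_2$ (on $\mathcal{C}$) exists and equals the restriction to $\mathcal{C}$ of $\underline{P}_1\otimes\underline{P}_2$, where $(\underline{P}_1\otimes\underline{P}_2)(f\vert B):=\underline{P}_{\mathcal{D}}(f\vert B)$ for all $(f,B)\in\mathcal{C}(\mathcal{X}_1\times\mathcal{X}_2)$, with $\mathcal{D}:=\mathcal{E}(\underline{P}_1)\otimes\mathcal{E}(\underline{P}_2)$.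
   Context: Gambles on a non-empty set $\mathcal{X}$ are bounded real functions; $\mathcal{G}(\mathcal{X})$ is the set of gambles, $\mathcal{G}_{>0}(\mathcal{X})$ the non-negative non-zero gambles, $\mathbb{I}_A$ the indicator of $A$. For $\mathcal{A}\subseteq\mathcal{G}(\mathcal{X})$: $\mathrm{posi}(\mathcal{A}):=\{\sum_{i=1}^n\lambda_if_i\colon n\in\mathbb{N},\lambda_i>0,f_i\in\mathcal{A}\}$, $\mathcal{E}(\mathcal{A}):=\mathrm{posi}(\mathcal{A}\cup\mathcal{G}_{>0}(\mathcal{X}))$. A coherent set of desirable gambles $\mathcal{D}\subseteq\mathcal{G}(\mathcal{X})$ satisfies: (D1) $f\geq0,f\neq0\Rightarrow f\in\mathcal{D}$; (D2) $f\in\mathcal{D},\lambda>0\Rightarrow\lambda f\in\mathcal{D}$; (D3) $f,g\in\mathcal{D}\Rightarrow f+g\in\mathcal{D}$; (D4) $f\leq0\Rightarrow f\notin\mathcal{D}$. $\mathcal{C}(\mathcal{X}):=\mathcal{G}(\mathcal{X})\times(\mathcal{P}(\mathcal{X})\setminus\{\emptyset\})$. A conditional lower prevision on $\mathcal{C}\subseteq\mathcal{C}(\mathcal{X})$ is a map $\underline{P}\colon\mathcal{C}\to\mathbb{R}\cup\{\pm\infty\}$, $(f,B)\mapsto\underline{P}(f\vert B)$. For $\mathcal{D}\subseteq\mathcal{G}(\mathcal{X})$, $\underline{P}_{\mathcal{D}}(f\vert B):=\sup\{\mu\in\mathbb{R}\colon[f-\mu]\mathbb{I}_B\in\mathcal{D}\}$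 for $(f,B)\in\mathcal{C}(\mathcal{X})$. $\underline{P}$ on $\mathcal{C}$ is coherent if there is a coherent set of desirable gambles $\mathcal{D}$ with $\underline{P}=\underline{P}_{\mathcal{D}}$ on $\mathcal{C}$. For coherent $\underline{P}$ on $\mathcal{C}$, $\mathcal{A}_{\underline{P}}:=\{[f-\mu]\mathbb{I}_B\colon(f,B)\in\mathcal{C},\mu<\underline{P}(f\vert B)\}$ and $\mathcal{E}(\underline{P}):=\mathcal{E}(\mathcal{A}_{\underline{P}})$. Two-variable setting: gambles/events on $\mathcal{X}_i$ are identified with their cylindrical extensions to $\mathcal{X}_1\times\mathcal{X}_2$ (e.g. $B\subseteq\mathcal{X}_1$ with $B\times\mathcal{X}_2$, $f\in\mathcal{G}(\mathcal{X}_1)$ with $f(X_1)(x_1,x_2)=f(x_1)$). For coherent sets of desirable gambles $\mathcal{D}_1,\mathcal{D}_2$ on $\mathcal{X}_1,\mathcal{X}_2$: $\mathcal{D}_1\otimes\mathcal{D}_2:=\mathcal{E}(\mathcal{A}_{1\to2}\cup\mathcal{A}_{2\to1})$ with $\mathcal{A}_{1\to2}:=\{f_2(X_2)\mathbb{I}_{B_1}(X_1)\colon f_2\in\mathcal{D}_2,B_1\in\mathcal{B}_1\cup\{\mathcal{X}_1\}\}$, $\mathcal{A}_{2\to1}:=\{f_1(X_1)\mathbb{I}_{B_2}(X_2)\colon f_1\in\mathcal{D}_1,B_2\in\mathcal{B}_2\cup\{\mathcal{X}_2\}\}$. A domain $\mathcal{C}\subseteq\mathcal{C}(\mathcal{X}_1\times\mathcal{X}_2)$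 is independent if for all $\{i,j\}=\{1,2\}$, all $(f_i,B_i)\in\mathcal{C}(\mathcal{X}_i)$ and all $B_j\in\mathcal{B}_j$: $(f_i,B_i)\in\mathcal{C}\iff(f_i,B_i\cap B_j)\in\mathcal{C}$. A coherent conditional lower prevision $\underline{P}$ on an independent domain $\mathcal{C}$ is epistemically independent if $\underline{P}(f_i\vert B_i)=\underline{P}(f_i\vert B_i\cap B_j)$ for all $\{i,j\}=\{1,2\}$, $(f_i,B_i)\in\mathcal{C}$ (with $f_i,B_i$ on $\mathcal{X}_i$) and $B_j\in\mathcal{B}_j$. An independent product of $\underline{P}_1,\underline{P}_2$ is an epistemically independent coherent conditional lower prevision $\underline{P}$ on $\mathcal{C}$ with $\underline{P}(f_i\vert B_i)=\underline{P}_i(f_i\vert B_i)$ for all $i$ and $(f_i,B_i)\in\mathcal{C}_i$; the independent natural extension is the pointwise smallest independent product. *)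

From HB Require Import structures.
From mathcomp Require Import all_boot all_order all_algebra.
From mathcomp Require Import boolp classical_sets reals constructive_ereal ereal.
Set Implicit Arguments. Unset Strict Implicit. Unset Printing Implicit Defensive.
Import Order.TTheory GRing.Theory Num.Theory.
Local Open Scope classical_set_scope.
Local Open Scope ring_scope.

Section Gambles.
Variable R : realType.

Section OneSpace.
Variable T : Type.

Definition gamble (f : T -> R) : Prop := exists M : R, forall x, `|f x| <= M.

Definition gamble_pos (f : T -> R) : Prop :=
  gamble f /\ (forall x, 0 <= f x) /\ (exists x, f x != 0).

Definition ind (B : set T) (x : T) : R := (x \in B)%:R.

Definition posi (A : set (T -> R)) : set (T -> R) :=
  [set g | exists (n : nat) (lam : nat -> R) (fs : nat -> T -> R),
     (0 < n)%N /\ (forall i, (i < n)%N -> 0 < lam i /\ A (fs i)) /\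
     g = (fun x => \sum_(i < n) lam i * fs i x)].

Definition natext (A : set (T -> R)) : set (T -> R) :=
  posi (A `|` [set f | gamble_pos f]).

Definition coherent_dg (D : set (T -> R)) : Prop :=
  (forall f, D f -> gamble f) /\
  (forall f, gamble_pos f -> D f) /\
  (forall f (lam : R), D f -> 0 < lam -> D (fun x => lam * f x)) /\
  (forall f g, D f -> D g -> D (fun x => f x + g x)) /\
  (forall f, gamble f -> (forall x, f x <= 0) -> ~ D f).

Definition cond_domain : set ((T -> R) * set T) :=
  [set p | gamble p.1 /\ p.2 !=set0].

(* lower prevision induced by D:  sup { mu | [f - mu] I_B ∈ D }  (sup ∅ = -oo) *)
Definition lpr (D : set (T -> R)) (p : (T -> R) * set T) : \bar R :=
  ereal_sup ((fun mu : R => mu%:E) @`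
    [set mu : R | D (fun x => (p.1 x - mu) * ind p.2 x)]).

Definition coherent_lpr (C : set ((T -> R) * set T))
    (P : (T -> R) * set T -> \bar R) : Prop :=
  exists D, coherent_dg D /\ forall p, C p -> P p = lpr D p.

Definition A_lpr (C : set ((T -> R) * set T))
    (P : (T -> R) * set T -> \bar R) : set (T -> R) :=
  [set g | exists f B (mu : R), C (f, B) /\ (mu%:E < P (f, B))%E /\
     g = (fun x => (f x - mu) * ind B x)].

Definition E_lpr C P := natext (A_lpr C P).

End OneSpace.

Section TwoSpaces.
Variables T1 T2 : Type.

Definition cyl1 (f : T1 -> R) : T1 * T2 -> R := fun x => f x.1.
Definition cyl2 (f : T2 -> R) : T1 * T2 -> R := fun x => f x.2.
Definition cyl1s (B : set T1) : set (T1 * T2) := [set x | B x.1].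
Definition cyl2s (B : set T2) : set (T1 * T2) := [set x | B x.2].

Variables (BB1 : set (set T1)) (BB2 : set (set T2)).

Definition dprod (D1 : set (T1 -> R)) (D2 : set (T2 -> R)) : set (T1 * T2 -> R) :=
  natext
   ([set g | exists f2 B1, D2 f2 /\ (BB1 B1 \/ B1 = setT) /\
        g = (fun x => f2 x.2 * ind B1 x.1)] `|`
    [set g | exists f1 B2, D1 f1 /\ (BB2 B2 \/ B2 = setT) /\
        g = (fun x => f1 x.1 * ind B2 x.2)]).

Definition indep_domain (C : set ((T1 * T2 -> R) * set (T1 * T2))) : Prop :=
  (forall f1 B1 B2, cond_domain (f1, B1) -> BB2 B2 ->
     (C (cyl1 f1, cyl1s B1) <-> C (cyl1 f1, cyl1s B1 `&` cyl2s B2))) /\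
  (forall f2 B2 B1, cond_domain (f2, B2) -> BB1 B1 ->
     (C (cyl2 f2, cyl2s B2) <-> C (cyl2 f2, cyl2s B2 `&` cyl1s B1))).

Definition epist_indep (C : set ((T1 * T2 -> R) * set (T1 * T2)))
    (P : (T1 * T2 -> R) * set (T1 * T2) -> \bar R) : Prop :=
  coherent_lpr C P /\
  (forall f1 B1 B2, C (cyl1 f1, cyl1s B1) -> BB2 B2 ->
     P (cyl1 f1, cyl1s B1) = P (cyl1 f1, cyl1s B1 `&` cyl2s B2)) /\
  (forall f2 B2 B1, C (cyl2 f2, cyl2s B2) -> BB1 B1 ->
     P (cyl2 f2, cyl2s B2) = P (cyl2 f2, cyl2s B2 `&` cyl1s B1)).

Definition indep_product
    (C1 : set ((T1 -> R) * set T1)) (C2 : set ((T2 -> R) * set T2))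
    (P1 : (T1 -> R) * set T1 -> \bar R) (P2 : (T2 -> R) * set T2 -> \bar R)
    (C : set ((T1 * T2 -> R) * set (T1 * T2)))
    (P : (T1 * T2 -> R) * set (T1 * T2) -> \bar R) : Prop :=
  epist_indep C P /\
  (forall p, C1 p -> P (cyl1 p.1, cyl1s p.2) = P1 p) /\
  (forall p, C2 p -> P (cyl2 p.1, cyl2s p.2) = P2 p).

Definition indep_natext C1 C2 P1 P2 C Q : Prop :=
  indep_product C1 C2 P1 P2 C Q /\
  forall P, indep_product C1 C2 P1 P2 C P -> forall p, C p -> (Q p <= P p)%E.

End TwoSpaces.
End Gambles.

From HB Require Import structures.
From mathcomp Require Import all_boot all_order all_algebra.
From mathcomp Require Import boolp classical_sets reals constructive_ereal ereal.
From mathcomp Require Import lra.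
Set Implicit Arguments. Unset Strict Implicit. Unset Printing Implicit Defensive.
Import Order.TTheory GRing.Theory Num.Theory.
Local Open Scope classical_set_scope.
Local Open Scope ring_scope.

(* The key fact is marginalisation: for B2 in BB2 ∪ {X2}, k(X1) I_{B2}(X2) lies
   in D1 ⊗ D2 iff k lies in D1, and symmetrically.  A gamble of D1 ⊗ D2 has the
   form Σ u_i(X2) I_{E_i}(X1) + Σ v_j(X1) I_{F_j}(X2) + h with u_i ∈ D2, v_j ∈ D1
   and h >= 0.  Integrating X2 out against nonnegative weights s on finitely many
   points for which every ∫ u_i ds is >= 0 and one is > 0 gives an element of
   D1, which is below a positive multiple of k when the gamble is below
   k(X1) I_{B2}(X2).  Such weights exist because every nontrivial nonnegative
   combination of the u_i is somewhere positive; they are found by eliminating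
   the u_i one at a time, Fourier-Motzkin style.  Marginalisation makes
   lpr (D1 ⊗ D2) an independent product of P1 and P2; it is the smallest one
   because epistemic independence, P(g(X2) | E × B1) = P2(g | E), puts the
   generators of D1 ⊗ D2 into the desirable gambles of any independent
   product P. *)

Section Indicator.
Variables (R : realType) (T : Type).
Implicit Types (A B : set T).

Lemma ind1 B x : B x -> ind R B x = 1.
Proof. by move=> Bx; rewrite /ind mem_set. Qed.

Lemma ind_ge0 B x : 0 <= ind R B x.
Proof. exact: ler0n. Qed.

Lemma indI A B x : ind R (A `&` B) x = ind R A x * ind R B x.
Proof. by rewrite /ind in_setI -natrM mulnb. Qed.

Lemma gamble_ind B : gamble (ind R B).
Proof. by exists 1 => x; rewrite /ind; case: (x \in B); rewrite ?normr1 ?normr0. Qed.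

End Indicator.

Lemma cyl1sT (T1 T2 : Type) : @cyl1s T1 T2 setT = setT.
Proof. exact/seteqP. Qed.

Lemma cyl2sT (T1 T2 : Type) : @cyl2s T1 T2 setT = setT.
Proof. exact/seteqP. Qed.

Section Gambles.
Variables (R : realType) (T : Type).
Implicit Types (f g : T -> R) (A S : set (T -> R)).

Lemma gamble_cst (c : R) : gamble (fun _ : T => c).
Proof. by exists `|c|. Qed.

Lemma gambleD f g : gamble f -> gamble g -> gamble (fun x => f x + g x).
Proof.
move=> [M hM] [N hN]; exists (M + N) => x.
by rewrite (le_trans (ler_normD _ _)) ?lerD.
Qed.

Lemma gambleM f g : gamble f -> gamble g -> gamble (fun x => f x * g x).
Proof.
move=> [M hM] [N hN]; exists (M * N) => x.
by rewrite normrM ler_pM.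
Qed.

Lemma gambleZ (c : R) f : gamble f -> gamble (fun x => c * f x).
Proof. exact/gambleM/gamble_cst. Qed.

Lemma gambleN f : gamble f -> gamble (fun x => - f x).
Proof. by move=> [M hM]; exists M => x; rewrite normrN. Qed.

Lemma gamble_comp (U : Type) (s : U -> T) f : gamble f -> gamble (fun y => f (s y)).
Proof. by move=> [M hM]; exists M. Qed.

Lemma gamble_pos_ind (B : set T) (c : R) : B !=set0 -> 0 < c -> gamble_pos (fun x => c * ind R B x).
Proof.
move=> [x Bx] c_gt0; split; first exact: gambleZ (gamble_ind _ _).
split; first by move=> y; apply: mulr_ge0 (ind_ge0 _ _ _); exact: ltW.
by exists x; rewrite ind1 // mulr1 gt_eqF.
Qed.

Definition fcat (X : Type) (n : nat) (a b : nat -> X) (i : nat) : X :=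
  if (i < n)%N then a i else b (i - n)%N.

Lemma fcat_lt (X : Type) n (a b : nat -> X) (i : 'I_n) : fcat n a b i = a i.
Proof. by rewrite /fcat ltn_ord. Qed.

Lemma fcat_addn (X : Type) n (a b : nat -> X) i : fcat n a b (n + i) = b i.
Proof. by rewrite /fcat ltnNge leq_addr addKn. Qed.

Lemma big_fcat (X : Type) (F : X -> R) n m (a b : nat -> X) :
  \sum_(i < n + m) F (fcat n a b i) = \sum_(i < n) F (a i) + \sum_(i < m) F (b i).
Proof.
rewrite big_split_ord /=.
by congr (_ + _); apply: eq_bigr => i _; rewrite ?fcat_lt ?fcat_addn.
Qed.

Lemma posi_in A f : A f -> posi A f.
Proof.
move=> Af; exists 1%N, (fun _ => 1), (fun _ => f); split => //; split.
  by move=> i _; split.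
by apply/funext => x; rewrite big_ord1 mul1r.
Qed.

Lemma posiZ A f (c : R) : posi A f -> 0 < c -> posi A (fun x => c * f x).
Proof.
move=> [n [lam [fs [n0 [hl ->]]]]] c0.
exists n, (fun i => c * lam i), fs; split => //; split.
  by move=> i /hl [l0 Af]; rewrite mulr_gt0.
by apply/funext => x; rewrite mulr_sumr; apply: eq_bigr => i _; rewrite mulrA.
Qed.

Lemma posiD A f g : posi A f -> posi A g -> posi A (fun x => f x + g x).
Proof.
move=> [n [lam [fs [n0 [hl ->]]]]] [m [lam' [fs' [m0 [hl' ->]]]]].
exists (n + m)%N, (fcat n lam lam'), (fcat n fs fs'); split; first by rewrite addn_gt0 n0.
split.
  move=> i; rewrite /fcat; case: ifP => [lt_in _|/negbT]; first exact: hl.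
  by rewrite -leqNgt => ni lt_i; apply: hl'; rewrite ltn_subLR.
apply/funext => x; rewrite big_split_ord /=.
by congr (_ + _); apply: eq_bigr => i _; rewrite ?fcat_lt ?fcat_addn.
Qed.

Lemma posi_min A S : A `<=` S ->
  (forall f (c : R), S f -> 0 < c -> S (fun x => c * f x)) ->
  (forall f g, S f -> S g -> S (fun x => f x + g x)) -> posi A `<=` S.
Proof.
move=> AS SZ SD _ [n [lam [fs [+ [+ ->]]]]].
elim: n => // n IH _ hl; under eq_fun do rewrite big_ord_recr /=.
have Sn : S (fun x => lam n * fs n x) by have [l0 /AS Sf] := hl n (ltnSn n); exact: SZ Sf l0.
case: n IH hl Sn => [|n] IH hl Sn; first by under eq_fun do rewrite big_ord0 add0r.
apply: SD Sn; apply: IH => // i lt_i; exact: (hl i (ltn_trans lt_i (ltnSn _))).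
Qed.

Lemma natext_in A f : A f -> natext A f.
Proof. by move=> Af; apply: posi_in; left. Qed.

Lemma natext_pos A f : gamble_pos f -> natext A f.
Proof. by move=> pf; apply: posi_in; right. Qed.

End Gambles.

Lemma natext_coherent (R : realType) (T : Type) (A : set (T -> R)) :
  (forall f, A f -> gamble f) -> (forall f, natext A f -> exists x, 0 < f x) ->
  coherent_dg (natext A).
Proof.
move=> Agamble Apos; split.
  apply: posi_min => [f [/Agamble|[]]//|f c gf _|]; [exact: gambleZ | exact: gambleD].
split; first by move=> f; apply: natext_pos.
split; first by move=> f c Af c0; apply: posiZ.
split; first by move=> f g; apply: posiD.
by move=> f _ f_le0 /Apos[x]; rewrite ltNge f_le0.
Qed.

Definition desirable_or_nonneg (R : realType) (T : Type) (D : set (T -> R)) (f : T -> R) : Prop :=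
  D f \/ (gamble f /\ forall x, 0 <= f x).

Section Coherence.
Variables (R : realType) (T : Type) (D : set (T -> R)).
Hypothesis cD : coherent_dg D.
Implicit Types (f g : T -> R) (A : set (T -> R)).

Lemma coh_gamble f : D f -> gamble f.
Proof. by case: cD => + _; apply. Qed.

Lemma coh_pos f : gamble_pos f -> D f.
Proof. by case: cD => _ [+ _]; apply. Qed.

Lemma cohZ f (c : R) : D f -> 0 < c -> D (fun x => c * f x).
Proof. by case: cD => _ [_ [+ _]]; apply. Qed.

Lemma cohD f g : D f -> D g -> D (fun x => f x + g x).
Proof. by case: cD => _ [_ [_ [+ _]]]; apply. Qed.

Lemma coh_gt0 f : D f -> exists x, 0 < f x.
Proof.
move=> Df; apply: contrapT => no_pos.
case: cD => _ [_ [_ [_ D4]]]; apply: (D4 f (coh_gamble Df)) Df => x.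
by rewrite leNgt; apply/negP => fx; apply: no_pos; exists x.
Qed.

Lemma cohDr f g : D f -> desirable_or_nonneg D g -> D (fun x => f x + g x).
Proof.
move=> Df [Dg|[gg g_ge0]]; first exact: cohD.
have [[x gx]|g_eq0] := pselect (exists x, g x != 0).
  by apply: cohD => //; apply: coh_pos; split; [|split => //; exists x].
suff -> : g = fun _ => 0 by under eq_fun do rewrite addr0.
by apply/funext => x; apply: contrapT => gx; apply: g_eq0; exists x; apply/eqP.
Qed.

Lemma desirable_or_nonnegD f g : desirable_or_nonneg D f -> desirable_or_nonneg D g ->
  desirable_or_nonneg D (fun x => f x + g x).
Proof.
move=> [Df|[gf f_ge0]] dg; first by left; exact: cohDr.
case: dg => [Dg|[gg g_ge0]].
  by left; under eq_fun do rewrite addrC; apply: cohDr Dg _; right.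
by right; split=> [|x]; [exact: gambleD | exact: addr_ge0].
Qed.

Lemma desirable_or_nonnegZ f (c : R) : desirable_or_nonneg D f -> 0 <= c ->
  desirable_or_nonneg D (fun x => c * f x).
Proof.
move=> nnf; rewrite le_eqVlt => /orP[/eqP<-|c_gt0].
  by under eq_fun do rewrite mul0r; right; split => //; exact: gamble_cst.
case: nnf => [Df|[gf f_ge0]]; first by left; exact: cohZ.
by right; split=> [|x]; [exact: gambleZ | apply: mulr_ge0 => //; exact: ltW].
Qed.

Lemma desirable_or_nonneg_sum (I : Type) (r : seq I) (P : pred I) (F : I -> T -> R) :
  (forall i, P i -> desirable_or_nonneg D (F i)) ->
  desirable_or_nonneg D (fun x => \sum_(i <- r | P i) F i x).
Proof.
move=> PF; elim: r => [|i r IH].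
  by under eq_fun do rewrite big_nil; right; split => //; exact: gamble_cst.
have [Pi|nPi] := boolP (P i); under eq_fun do rewrite big_cons ?Pi ?(negbTE nPi).
  exact: desirable_or_nonnegD (PF i Pi) IH.
exact: IH.
Qed.

Lemma coh_sum_strict n (F : 'I_n -> T -> R) :
  (forall i, desirable_or_nonneg D (F i)) -> (exists i, D (F i)) ->
  D (fun x => \sum_(i < n) F i x).
Proof.
move=> nnF [j DFj]; under eq_fun do rewrite (bigD1 j) //=.
by apply: cohDr DFj _; apply: desirable_or_nonneg_sum => i _; exact: nnF.
Qed.

Lemma coh_le f g : D f -> gamble g -> (forall x, f x <= g x) -> D g.
Proof.
move=> Df gg fg; have -> : g = fun x => f x + (g x - f x).
  by apply/funext => x; rewrite addrC subrK.
apply: (cohDr Df); right; split; last by move=> x; rewrite subr_ge0.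
exact: gambleD gg (gambleN (coh_gamble Df)).
Qed.

Lemma posi_sub A : A `<=` D -> posi A `<=` D.
Proof. by move=> AD; apply: posi_min AD cohZ cohD. Qed.

Lemma natext_sub A : A `<=` D -> natext A `<=` D.
Proof. by move=> AD; apply: posi_sub => f [/AD|/coh_pos]. Qed.

End Coherence.

Lemma natext_weighted_sub (R : realType) (X Y : Type) (A : set (X -> R)) (D : set (Y -> R))
    (sg : Y -> X) (w : Y -> R) :
  coherent_dg D -> gamble w -> (forall y, 0 <= w y) -> (forall x, exists2 y, sg y = x & 0 < w y) ->
  (forall f, A f -> D (fun y => f (sg y) * w y)) ->
  forall f, natext A f -> D (fun y => f (sg y) * w y).
Proof.
move=> cD gw w_ge0 w_pos AD; apply: (posi_min (S := fun f => D (fun y => f (sg y) * w y))).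
- move=> f [/AD //|[gf [f_ge0 [x fx]]]]; apply: (coh_pos cD); split.
    exact: gambleM (gamble_comp sg gf) gw.
  split=> [y|]; first exact: mulr_ge0.
  by have [y sg_y wy] := w_pos x; exists y; rewrite sg_y mulf_eq0 negb_or fx gt_eqF.
- by move=> f c Df c_gt0; under eq_fun do rewrite -mulrA; exact: cohZ.
- by move=> f g Df Dg; under eq_fun do rewrite mulrDl; exact: cohD.
Qed.

Lemma lee_of_real_lt (R : realType) (x y : \bar R) :
  (forall r : R, (r%:E < x)%E -> (r%:E <= y)%E) -> (x <= y)%E.
Proof.
case: x => [a| |] h; last by rewrite leNye.
- case: y h => [b| |] h; [|by rewrite leey|].
    rewrite lee_fin leNgt; apply/negP => lt_ba.
    have := h ((a + b) / 2); rewrite !lte_fin !lee_fin; lra.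
  by have := h (a - 1); rewrite lte_fin leeNy_eq gtrDl ltrN10 => /(_ isT).
- by rewrite (eq_infty (fun r => h r (ltry r))) leey.
Qed.

Lemma gamble_cond (R : realType) (T : Type) (f : T -> R) (B : set T) (mu : R) :
  gamble f -> gamble (fun x => (f x - mu) * ind R B x).
Proof. by move=> gf; apply: gambleM (gamble_ind _ _); apply: gambleD gf (gamble_cst _ _). Qed.

Lemma eq_lpr (R : realType) (T T' : Type) (D : set (T -> R)) (D' : set (T' -> R)) p p' :
  (forall mu, D (fun x => (p.1 x - mu) * ind R p.2 x) <->
              D' (fun x => (p'.1 x - mu) * ind R p'.2 x)) ->
  lpr D p = lpr D' p'.
Proof. by move=> DD'; rewrite /lpr; congr (ereal_sup (_ @` _)); apply/seteqP; split => mu /DD'. Qed.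

Section LowerPrevision.
Variables (R : realType) (T : Type).
Implicit Types (D : set (T -> R)) (p : (T -> R) * set T) (C : set ((T -> R) * set T)).

Lemma lpr_le D D' p : D `<=` D' -> (lpr D p <= lpr D' p)%E.
Proof. by move=> DD'; apply: ereal_sup_le => _ [mu Dmu <-]; exists mu => //; exact: DD'. Qed.

Lemma lpr_ge D p (P : \bar R) :
  (forall mu : R, (mu%:E < P)%E -> D (fun x => (p.1 x - mu) * ind R p.2 x)) ->
  (P <= lpr D p)%E.
Proof.
move=> DP; apply: lee_of_real_lt => r rP.
by apply: ereal_sup_ubound; exists r => //; exact: DP.
Qed.

Lemma A_lpr_sub C P D : coherent_dg D -> C `<=` @cond_domain R T ->
  (forall p, C p -> P p = lpr D p) -> A_lpr C P `<=` D.
Proof.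
move=> cD hC PD _ [f [B [mu [CfB [+ ->]]]]].
rewrite PD // => /ereal_sup_gt[_ [mu' Dmu' <-]]; rewrite lte_fin => lt_mu.
have [gf _] := hC _ CfB.
apply: (coh_le cD Dmu'); first exact: gamble_cond.
by move=> x /=; rewrite ler_wpM2r ?ind_ge0 // lerB // ltW.
Qed.

Lemma E_lpr_coherent C P : C `<=` @cond_domain R T -> coherent_lpr C P ->
  coherent_dg (E_lpr C P).
Proof.
move=> hC [D [cD PD]]; apply: natext_coherent.
  by move=> _ [f [B [mu [/hC [gf _] [_ ->]]]]]; exact: gamble_cond.
by move=> f /(natext_sub cD (A_lpr_sub cD hC PD)); exact: coh_gt0.
Qed.

Lemma lpr_E_lpr C P : C `<=` @cond_domain R T -> coherent_lpr C P ->
  forall p, C p -> lpr (E_lpr C P) p = P p.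
Proof.
move=> hC [D [cD PD]] [f B] CfB; apply/le_anti/andP; split.
  by rewrite PD //; exact/lpr_le/(natext_sub cD (A_lpr_sub cD hC PD)).
by apply: lpr_ge => mu muP; apply: natext_in; exists f, B, mu.
Qed.

End LowerPrevision.

Section Weights.
Variables (R : realType) (X : Type).
Implicit Types (s : seq (R * X)) (f g : X -> R).

Definition wsum (s : seq (R * X)) (f : X -> R) : R := \sum_(q <- s) q.1 * f q.2.

Lemma wsum_le s f g : all (fun q => 0 <= q.1) s -> (forall x, f x <= g x) ->
  wsum s f <= wsum s g.
Proof.
move=> + fg; elim: s => [|q s IH] /=; first by rewrite /wsum !big_nil.
move=> /andP[q_ge0 /IH]; rewrite /wsum !big_cons => le_s.
by apply: lerD le_s; exact: ler_wpM2l.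
Qed.

Lemma wsum_ge0 s f : all (fun q => 0 <= q.1) s -> (forall x, 0 <= f x) -> 0 <= wsum s f.
Proof.
move=> s_ge0 /(wsum_le s_ge0); apply: le_trans.
by rewrite /wsum big1 // => q _; rewrite mulr0.
Qed.

Lemma wsumD s f g : wsum s (fun x => f x + g x) = wsum s f + wsum s g.
Proof. by rewrite /wsum -big_split; apply: eq_bigr => q _; rewrite mulrDr. Qed.

Lemma wsumMr s f (c : R) : wsum s (fun x => f x * c) = wsum s f * c.
Proof. by rewrite /wsum mulr_suml; apply: eq_bigr => q _; rewrite mulrA. Qed.

Lemma wsum_sum s n (F : 'I_n -> X -> R) :
  wsum s (fun x => \sum_(i < n) F i x) = \sum_(i < n) wsum s (F i).
Proof. by rewrite /wsum [RHS]exchange_big; apply: eq_bigr => q _; rewrite mulr_sumr. Qed.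

Lemma gamble_wsum (Y : Type) s (h : Y -> X -> R) :
  (forall x, gamble (fun y => h y x)) -> gamble (fun y => wsum s (h y)).
Proof.
move=> gh; rewrite /wsum; elim: s => [|q s IH].
  by under eq_fun do rewrite big_nil; exact: gamble_cst.
by under eq_fun do rewrite big_cons; exact: gambleD (gambleZ _ (gh _)) IH.
Qed.

Lemma wsum1 (x : X) f : wsum [:: (1, x)] f = f x.
Proof. by rewrite /wsum big_seq1 mul1r. Qed.

End Weights.

Definition comb_somewhere_pos (R : realType) (X : Type) (n : nat) (u : nat -> X -> R) : Prop :=
  forall c : nat -> R, (forall i, (i < n)%N -> 0 <= c i) -> (exists2 i, (i < n)%N & 0 < c i) ->
  exists x, 0 < \sum_(i < n) c i * u i x.

Lemma coherent_comb_somewhere_pos (R : realType) (X : Type) (D : set (X -> R)) n u :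
  coherent_dg D -> (forall i, (i < n)%N -> D (u i)) -> comb_somewhere_pos n u.
Proof.
move=> cD Du c c_ge0 [i lt_in ci_gt0]; apply: (coh_gt0 cD).
apply: (coh_sum_strict cD (F := fun j x => c j * u j x)).
  by move=> j; apply: (desirable_or_nonnegZ cD); [left; exact: Du | exact: c_ge0].
by exists (Ordinal lt_in); apply: cohZ => //; exact: Du.
Qed.

Section Separation.
Variables (R : realType) (X : Type).
Implicit Types (d u v : X -> R).

Lemma fourier_motzkin_step d v x0 : 0 < v x0 ->
  (forall x, 0 <= v x -> d x <= 0) ->
  (forall x z, 0 <= v x -> v z < 0 -> - v z * d x + v x * d z <= 0) ->
  exists2 t : R, 0 <= t & forall x, d x + t * v x <= 0.
Proof.
move=> vx0_gt0 d_le0 d_pair.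
(* d_pair says that sup S lies below every - d x / v x with v x > 0; any t
   between the two works. *)
pose S := [set d z / - v z | z in [set z | v z < 0]].
have S_le x : 0 < v x -> forall r, S r -> r <= - d x / v x.
  move=> vx_gt0 _ [z /= vz_lt0 <-].
  rewrite ler_pdivrMr ?oppr_gt0 // mulrAC ler_pdivlMr //.
  by have := d_pair x z (ltW vx_gt0) vz_lt0; nra.
have supS_le x : 0 < v x -> sup S <= - d x / v x.
  move=> vx_gt0; have [S0|/nonemptyPn->] := pselect (S !=set0).
    by apply: ge_sup S0 _; exact: S_le.
  by rewrite sup0 divr_ge0 ?oppr_ge0 ?d_le0 ?ltW.
exists (Num.max 0 (sup S)); first by rewrite le_max lexx.
move=> x; case: (ltgtP 0 (v x)) => [vx_gt0|vx_lt0|vx0].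
- have : Num.max 0 (sup S) <= - d x / v x.
    by rewrite ge_max supS_le // divr_ge0 ?oppr_ge0 ?d_le0 ?ltW.
  by rewrite ler_pdivlMr //; lra.
- have Sx : S (d x / - v x) by exists x.
  have : d x / - v x <= Num.max 0 (sup S).
    rewrite le_max; apply/orP; right; apply: (sup_upper_bound _ Sx).
    by split; [exists (d x / - v x) | exists (- d x0 / v x0); exact: S_le vx0_gt0].
  by rewrite ler_pdivrMr ?oppr_gt0 //; lra.
- by rewrite -vx0 mulr0 addr0; apply: d_le0; rewrite -vx0.
Qed.

(* On pairs (x, z) with v x >= 0 > v z the weights (- v z, v x) cancel v, so
   that pair_comb v v >= 0: v can be dropped from the family, at the price of
   passing from X to X * X. *)
Definition pair_wts (v : X -> R) (xz : X * X) : R * R :=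
  if v xz.1 < 0 then (0, 0) else if v xz.2 < 0 then (- v xz.2, v xz.1) else (1, 0).

Definition pair_comb (v u : X -> R) (xz : X * X) : R :=
  (pair_wts v xz).1 * u xz.1 + (pair_wts v xz).2 * u xz.2.

Lemma pair_wts_ge0 v xz : 0 <= (pair_wts v xz).1 /\ 0 <= (pair_wts v xz).2.
Proof.
rewrite /pair_wts; case: ltP => // vx_ge0.
by case: ltP => // vz_lt0; rewrite oppr_ge0 ltW.
Qed.

Lemma pair_comb_self_ge0 v xz : 0 <= pair_comb v v xz.
Proof.
rewrite /pair_comb /pair_wts; case: ltP => [_|vx_ge0]; first by rewrite !mul0r addr0.
by case: ltP => _ /=; rewrite ?mulNr ?[v xz.1 * _]mulrC ?addNr ?mul1r ?mul0r ?addr0.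
Qed.

Fixpoint unpair (v : X -> R) (s : seq (R * (X * X))) : seq (R * X) :=
  if s is q :: s' then
    [:: (q.1 * (pair_wts v q.2).1, q.2.1), (q.1 * (pair_wts v q.2).2, q.2.2) & unpair v s']
  else [::].

Lemma wsum_unpair v s u : wsum (unpair v s) u = wsum s (pair_comb v u).
Proof.
elim: s => [|q s IH]; first by rewrite /wsum !big_nil.
by move: IH; rewrite /wsum /= !big_cons => ->; rewrite addrA mulrDr !mulrA.
Qed.

Lemma unpair_ge0 v s : all (fun q => 0 <= q.1) s -> all (fun q => 0 <= q.1) (unpair v s).
Proof.
elim: s => [|q s IH] //= /andP[q_ge0 /IH ->]; have [w1 w2] := pair_wts_ge0 v q.2.
by rewrite !mulr_ge0.
Qed.

Lemma comb_somewhere_pos_pair m (u : nat -> X -> R) : comb_somewhere_pos m.+2 u ->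
  comb_somewhere_pos m.+1 (fun i => pair_comb (u m.+1) (u i)).
Proof.
move=> hu c c_ge0 [i lt_i ci_gt0]; apply: contrapT => no_pos.
pose v := u m.+1; pose d x := \sum_(j < m.+1) c j * u j x.
have comb_le0 xz : (pair_wts v xz).1 * d xz.1 + (pair_wts v xz).2 * d xz.2 <= 0.
  rewrite leNgt; apply/negP => pos; apply: no_pos; exists xz; move: pos.
  rewrite /d !mulr_sumr -big_split /=.
  by under [X in _ < X -> _]eq_bigr do rewrite mulrCA [_ * (_ * u _ _)]mulrCA -mulrDr.
have d_le0 x : 0 <= v x -> d x <= 0.
  by move=> vx_ge0; move: (comb_le0 (x, x)); rewrite /pair_wts /= ltNge vx_ge0 /=; lra.
have d_pair x z : 0 <= v x -> v z < 0 -> - v z * d x + v x * d z <= 0.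
  by move=> vx_ge0 vz_lt0; move: (comb_le0 (x, z)); rewrite /pair_wts /= ltNge vx_ge0 vz_lt0.
have [x0 vx0_gt0] : exists x0, 0 < v x0.
  have [x] : exists x, 0 < \sum_(j < m.+2) (if j == m.+1 :> nat then 1 else 0) * u j x.
    apply: (hu (fun j => if j == m.+1 :> nat then 1 else 0)) => [j _|].
      by case: eqP.
    by exists m.+1; rewrite ?eqxx.
  rewrite big_ord_recr /= eqxx mul1r big1 ?add0r => [|j _]; first by exists x.
  by rewrite (ltn_eqF (ltn_ord j)) mul0r.
have [t t_ge0 dt_le0] := fourier_motzkin_step vx0_gt0 d_le0 d_pair.
have [x] : exists x, 0 < \sum_(j < m.+2) (if j == m.+1 :> nat then t else c j) * u j x.
  apply: (hu (fun j => if j == m.+1 :> nat then t else c j)) => [j|].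
    by rewrite ltnS leq_eqVlt; case: eqP => //= _ /c_ge0.
  by exists i; rewrite ?(ltn_eqF lt_i) // ltnW.
rewrite big_ord_recr /= eqxx (eq_bigr (fun j : 'I_m.+1 => c j * u j x)) => [|j _].
  by apply/negP; rewrite -leNgt; exact: dt_le0.
by rewrite (ltn_eqF (ltn_ord j)).
Qed.

End Separation.

Lemma comb_somewhere_pos_weights (R : realType) (X : Type) m (u : nat -> X -> R) :
  comb_somewhere_pos m.+1 u ->
  exists2 s : seq (R * X), all (fun q => 0 <= q.1) s &
    (forall i, (i < m.+1)%N -> 0 <= wsum s (u i)) /\ exists2 i, (i < m.+1)%N & 0 < wsum s (u i).
Proof.
elim: m X u => [|m IH] X u hu.
  have [|x] := hu (fun _ => 1) (fun _ _ => ler01); first by exists 0%N.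
  rewrite big_ord1 mul1r => ux_gt0; exists [:: (1, x)]; first by rewrite /= ler01.
  split; last by exists 0%N; rewrite ?wsum1.
  by move=> i; rewrite ltnS leqn0 => /eqP->; rewrite wsum1 ltW.
have [s s_ge0 [s_u [i lt_i s_ui]]] := IH _ _ (comb_somewhere_pos_pair hu).
exists (unpair (u m.+1) s); first exact: unpair_ge0.
split; last by exists i; [exact: ltnW | rewrite wsum_unpair].
move=> j; rewrite ltnS leq_eqVlt => /orP[/eqP->|lt_j]; rewrite wsum_unpair; last exact: s_u.
by apply: wsum_ge0 => // xz; exact: pair_comb_self_ge0.
Qed.

Section ProductNormalForm.
Variables (R : realType) (T1 T2 : Type) (BB1 : set (set T1)) (BB2 : set (set T2)).
Variables (D1 : set (T1 -> R)) (D2 : set (T2 -> R)).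
Hypotheses (cD1 : coherent_dg D1) (cD2 : coherent_dg D2).

Definition gen12 (a : (T2 -> R) * set T1) (x : T1 * T2) : R := a.1 x.2 * ind R a.2 x.1.
Definition gen21 (b : (T1 -> R) * set T2) (x : T1 * T2) : R := b.1 x.1 * ind R b.2 x.2.

Definition dprod_nf (g : T1 * T2 -> R) : Prop :=
  exists n12 (a : nat -> (T2 -> R) * set T1) n21 (b : nat -> (T1 -> R) * set T2) h,
  [/\ forall i, (i < n12)%N -> D2 (a i).1 /\ (BB1 (a i).2 \/ (a i).2 = setT),
      forall j, (j < n21)%N -> D1 (b j).1 /\ (BB2 (b j).2 \/ (b j).2 = setT),
      gamble h /\ (forall x, 0 <= h x),
      [\/ (0 < n12)%N, (0 < n21)%N | exists x, h x != 0] &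
      g = fun x => \sum_(i < n12) gen12 (a i) x + \sum_(j < n21) gen21 (b j) x + h x].

Lemma dprod_nfZ g (c : R) : dprod_nf g -> 0 < c -> dprod_nf (fun x => c * g x).
Proof.
move=> [n12 [a [n21 [b [h [a_ok b_ok [gh h_ge0] nz ->]]]]]] c_gt0.
exists n12, (fun i => (fun y => c * (a i).1 y, (a i).2)).
exists n21, (fun j => (fun y => c * (b j).1 y, (b j).2)), (fun x => c * h x); split.
- by move=> i /a_ok[Da Ba]; split => //; exact: cohZ.
- by move=> j /b_ok[Db Bb]; split => //; exact: cohZ.
- by split=> [|x]; [exact: gambleZ | apply: mulr_ge0 => //; exact: ltW].
- case: nz => [n_gt0|n_gt0|[x hx]]; [exact: Or31 | exact: Or32 | apply: Or33].
  by exists x; rewrite mulf_eq0 negb_or hx gt_eqF.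
- apply/funext => x; rewrite !mulrDr !mulr_sumr.
  by congr (_ + _ + _); apply: eq_bigr => i _; rewrite /gen12 /gen21 mulrA.
Qed.

Lemma dprod_nfD g g' : dprod_nf g -> dprod_nf g' -> dprod_nf (fun x => g x + g' x).
Proof.
move=> [n12 [a [n21 [b [h [a_ok b_ok [gh h_ge0] nz ->]]]]]].
move=> [n12' [a' [n21' [b' [h' [a_ok' b_ok' [gh' h_ge0'] nz' ->]]]]]].
exists (n12 + n12')%N, (fcat n12 a a'), (n21 + n21')%N, (fcat n21 b b'), (fun x => h x + h' x).
split.
- move=> i; rewrite /fcat; case: ifP => [lt_i _|/negbT]; first exact: a_ok.
  by rewrite -leqNgt => le_i lt_i; apply: a_ok'; rewrite ltn_subLR.
- move=> j; rewrite /fcat; case: ifP => [lt_j _|/negbT]; first exact: b_ok.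
  by rewrite -leqNgt => le_j lt_j; apply: b_ok'; rewrite ltn_subLR.
- by split=> [|x]; [exact: gambleD | exact: addr_ge0].
- case: nz => [n_gt0|n_gt0|[x hx]]; first by apply: Or31; rewrite ltn_addr.
    by apply: Or32; rewrite ltn_addr.
  case: nz' => [n_gt0|n_gt0|_]; first by apply: Or31; rewrite ltn_addl.
    by apply: Or32; rewrite ltn_addl.
  apply: Or33; exists x; rewrite gt_eqF // ltr_pwDl //.
  by rewrite lt_neqAle eq_sym hx h_ge0.
- apply/funext => x; rewrite (@big_fcat _ _ (gen12^~ x)) (@big_fcat _ _ (gen21^~ x)).
  by rewrite addrACA [X in X + _ = _]addrACA.
Qed.

Lemma wsum_nf_section (s : seq (R * T2)) n12 a n21 b (h : T1 * T2 -> R) x1 :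
  wsum s (fun x2 => \sum_(i < n12) gen12 (a i) (x1, x2) +
                    \sum_(j < n21) gen21 (b j) (x1, x2) + h (x1, x2)) =
  \sum_(i < n12) wsum s (a i).1 * ind R (a i).2 x1 +
  \sum_(j < n21) wsum s (ind R (b j).2) * (b j).1 x1 + wsum s (fun x2 => h (x1, x2)).
Proof.
rewrite !wsumD !wsum_sum; congr (_ + _ + _); apply: eq_bigr => i _; rewrite -wsumMr //.
by congr wsum; apply/funext => x2; rewrite /gen21 mulrC.
Qed.

Lemma dprod_sub_nf : dprod BB1 BB2 D1 D2 `<=` dprod_nf.
Proof.
apply: (posi_min _ dprod_nfZ dprod_nfD).
move=> g [[[f2 [B1 [Df2 [B1_ok ->]]]]|[f1 [B2 [Df1 [B2_ok ->]]]]]|[gg [g_ge0 [x gx]]]].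
- exists 1%N, (fun _ => (f2, B1)), 0%N, (fun _ => (fun _ => 0, set0)), (fun _ => 0).
  split=> //; [by split=> [|x]; [exact: gamble_cst|] | exact: Or31 |].
  by apply/funext => x; rewrite big_ord1 big_ord0 !addr0.
- exists 0%N, (fun _ => (fun _ => 0, set0)), 1%N, (fun _ => (f1, B2)), (fun _ => 0).
  split=> //; [by split=> [|x]; [exact: gamble_cst|] | exact: Or32 |].
  by apply/funext => x; rewrite big_ord1 big_ord0 add0r addr0.
- exists 0%N, (fun _ => (fun _ => 0, set0)), 0%N, (fun _ => (fun _ => 0, set0)), g.
  split=> //; first by apply: Or33; exists x.
  by apply/funext => y; rewrite !big_ord0 !add0r.
Qed.

End ProductNormalForm.

Section Marginal.
Variables (R : realType) (T1 T2 : Type) (BB1 : set (set T1)) (BB2 : set (set T2)).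
Hypotheses (ne1 : exists x : T1, True) (ne2 : exists x : T2, True).
Hypotheses (hBB1 : forall B, BB1 B -> B !=set0) (hBB2 : forall B, BB2 B -> B !=set0).
Variables (D1 : set (T1 -> R)) (D2 : set (T2 -> R)).
Hypotheses (cD1 : coherent_dg D1) (cD2 : coherent_dg D2).

Lemma cond_nonempty1 (B : set T1) : BB1 B \/ B = setT -> B !=set0.
Proof. by case=> [/hBB1 //|->]; case: ne1 => x _; exists x. Qed.

Lemma cond_nonempty2 (B : set T2) : BB2 B \/ B = setT -> B !=set0.
Proof. by case=> [/hBB2 //|->]; case: ne2 => x _; exists x. Qed.

Lemma desirable_of_wsum_bound (s : seq (R * T2)) g (k : T1 -> R) (B2 : set T2) :
  all (fun q => 0 <= q.1) s -> gamble k -> (forall x, g x <= k x.1 * ind R B2 x.2) ->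
  D1 (fun x1 => wsum s (fun x2 => g (x1, x2))) -> D1 k.
Proof.
move=> s_ge0 gk g_le Dpsi.
have psi_le x1 : wsum s (fun x2 => g (x1, x2)) <= k x1 * wsum s (ind R B2).
  rewrite mulrC -wsumMr; apply: wsum_le => // x2.
  by rewrite mulrC; exact: (g_le (x1, x2)).
have W_gt0 : 0 < wsum s (ind R B2).
  have W_ge0 : 0 <= wsum s (ind R B2) by apply: wsum_ge0 => // x; exact: ind_ge0.
  rewrite lt_neqAle W_ge0 andbT.
  apply/eqP => W0; have [x1] := coh_gt0 cD1 Dpsi; apply/negP; rewrite -leNgt.
  by rewrite (le_trans (psi_le x1)) // -W0 mulr0.
have Winv_gt0 : 0 < (wsum s (ind R B2))^-1 by rewrite invr_gt0.
apply: (coh_le cD1 (cohZ cD1 Dpsi Winv_gt0) gk) => x1 /=.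
by rewrite ler_pdivrMl // mulrC psi_le.
Qed.

Lemma dprod_nf_section g : dprod_nf BB1 BB2 D1 D2 g ->
  exists2 s : seq (R * T2), all (fun q => 0 <= q.1) s &
    D1 (fun x1 => wsum s (fun x2 => g (x1, x2))).
Proof.
move=> [n12 [a [n21 [b [h [a_ok b_ok [gh h_ge0] nz ->]]]]]].
have psih_ge0 (s : seq (R * T2)) : all (fun q => 0 <= q.1) s ->
    desirable_or_nonneg D1 (fun x1 => wsum s (fun x2 => h (x1, x2))).
  move=> s_ge0; right; split=> [|x1]; last exact: wsum_ge0.
  by apply: gamble_wsum => x2; exact: (gamble_comp (fun x1 => (x1, x2))).
have psi21_ge0 (s : seq (R * T2)) : all (fun q => 0 <= q.1) s ->
    desirable_or_nonneg D1 (fun x1 => \sum_(j < n21) wsum s (ind R (b j).2) * (b j).1 x1).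
  move=> s_ge0; apply: (desirable_or_nonneg_sum cD1) => j _.
  apply: (desirable_or_nonnegZ cD1); first by left; exact: (b_ok j (ltn_ord j)).1.
  by apply: wsum_ge0 => // x2; exact: ind_ge0.
(* If there are generators u_i(X2) I_{E_i}(X1), separating weights make their
   integral a positive gamble; otherwise a single point mass will do. *)
case: (posnP n12) => [n12_0|n12_gt0]; last first.
  have [m n12E] : exists m, n12 = m.+1 by exists n12.-1; rewrite prednK.
  have a_ok' i : (i < m.+1)%N -> D2 (a i).1 by rewrite -n12E => /a_ok[].
  have [s s_ge0 [s_a [i lt_i s_ai]]] :=
    comb_somewhere_pos_weights (coherent_comb_somewhere_pos cD2 a_ok').
  exists s => //; under eq_fun do rewrite wsum_nf_section.
  apply: (cohDr cD1) (psih_ge0 _ s_ge0); apply: (cohDr cD1) (psi21_ge0 _ s_ge0).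
  apply: (coh_sum_strict cD1) => [j|].
    apply: (desirable_or_nonnegZ cD1); last by apply: s_a; rewrite -n12E.
    by right; split; [exact: gamble_ind | exact: ind_ge0].
  rewrite -n12E in lt_i; exists (Ordinal lt_i); apply: (coh_pos cD1).
  exact: gamble_pos_ind (cond_nonempty1 (a_ok i lt_i).2) s_ai.
subst n12; case: (posnP n21) => [n21_0|n21_gt0]; last first.
  have [x2 bx2] := cond_nonempty2 (b_ok 0%N n21_gt0).2.
  exists [:: (1, x2)]; first by rewrite /= ler01.
  under eq_fun do rewrite wsum_nf_section big_ord0 add0r.
  apply: (cohDr cD1) (psih_ge0 _ _); last by rewrite /= ler01.
  apply: (coh_sum_strict cD1) => [j|].
    apply: (desirable_or_nonnegZ cD1); first by left; exact: (b_ok j (ltn_ord j)).1.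
    by rewrite wsum1 ind_ge0.
  exists (Ordinal n21_gt0); rewrite wsum1 ind1 //.
  by under eq_fun do rewrite mul1r; exact: (b_ok 0%N n21_gt0).1.
subst n21; have [[y1 y2] hy] : exists x, h x != 0 by case: nz.
exists [:: (1, y2)]; first by rewrite /= ler01.
under eq_fun do rewrite wsum_nf_section !big_ord0 !add0r wsum1.
apply: (coh_pos cD1); split; first exact: (gamble_comp (fun x1 => (x1, y2))).
by split=> [x1|]; [exact: h_ge0 | exists y1].
Qed.

Lemma dprod_nf_marginal g (k : T1 -> R) (B2 : set T2) :
  dprod_nf BB1 BB2 D1 D2 g -> gamble k -> (forall x, g x <= k x.1 * ind R B2 x.2) -> D1 k.
Proof.
move=> /dprod_nf_section[s s_ge0 Dpsi] gk g_le.
exact: desirable_of_wsum_bound s_ge0 gk g_le Dpsi.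
Qed.

End Marginal.

Lemma dprod_swap (R : realType) (T1 T2 : Type) (BB1 : set (set T1)) (BB2 : set (set T2))
    (D1 : set (T1 -> R)) (D2 : set (T2 -> R)) g :
  dprod BB1 BB2 D1 D2 g -> dprod BB2 BB1 D2 D1 (fun y => g (y.2, y.1)).
Proof.
move: g; apply: (posi_min (S := fun g => dprod BB2 BB1 D2 D1 (fun y => g (y.2, y.1))));
  [|by move=> f c /posiZ; apply|by move=> f f' /posiD; apply].
move=> f [[[f2 [B1 [Df2 [B1_ok ->]]]]|[f1 [B2 [Df1 [B2_ok ->]]]]]|[gf [f_ge0 [[x1 x2] fx]]]].
- by apply: natext_in; right; exists f2, B1.
- by apply: natext_in; left; exists f1, B2.
- apply: natext_pos; split; first exact: (gamble_comp (fun y => (y.2, y.1))).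
  by split=> [y|]; [exact: f_ge0 | exists (x2, x1)].
Qed.

Section Product.
Variables (R : realType) (T1 T2 : Type) (BB1 : set (set T1)) (BB2 : set (set T2)).
Hypotheses (ne1 : exists x : T1, True) (ne2 : exists x : T2, True).
Hypotheses (hBB1 : forall B, BB1 B -> B !=set0) (hBB2 : forall B, BB2 B -> B !=set0).
Variables (D1 : set (T1 -> R)) (D2 : set (T2 -> R)).
Hypotheses (cD1 : coherent_dg D1) (cD2 : coherent_dg D2).

Lemma dprod_coherent : coherent_dg (dprod BB1 BB2 D1 D2).
Proof.
apply: natext_coherent.
  move=> _ [[f2 [B1 [/(coh_gamble cD2) gf [_ ->]]]]|[f1 [B2 [/(coh_gamble cD1) gf [_ ->]]]]].
    exact: gambleM (gamble_comp snd gf) (gamble_comp fst (gamble_ind _ _)).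
  exact: gambleM (gamble_comp fst gf) (gamble_comp snd (gamble_ind _ _)).
move=> f /(dprod_sub_nf cD1 cD2) f_nf; apply: contrapT => f_le0.
have /(coh_gt0 cD1)[x] : D1 (fun _ => 0).
  apply: (dprod_nf_marginal ne1 ne2 hBB1 hBB2 cD1 cD2 (B2 := setT) f_nf (gamble_cst _ _)).
  by move=> x; rewrite mul0r leNgt; apply/negP => fx; apply: f_le0; exists x.
by rewrite ltxx.
Qed.

Lemma dprod_marginal1 (k : T1 -> R) (B2 : set T2) : gamble k -> BB2 B2 \/ B2 = setT ->
  dprod BB1 BB2 D1 D2 (fun x => k x.1 * ind R B2 x.2) <-> D1 k.
Proof.
move=> gk B2_ok; split=> [/(dprod_sub_nf cD1 cD2) k_nf|Dk]; last first.
  by apply: natext_in; right; exists k, B2.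
exact: (dprod_nf_marginal ne1 ne2 hBB1 hBB2 cD1 cD2 k_nf gk).
Qed.

Lemma dprod_marginal2 (k : T2 -> R) (B1 : set T1) : gamble k -> BB1 B1 \/ B1 = setT ->
  dprod BB1 BB2 D1 D2 (fun x => k x.2 * ind R B1 x.1) <-> D2 k.
Proof.
move=> gk B1_ok; split=> [/dprod_swap/(dprod_sub_nf cD2 cD1) k_nf|Dk]; last first.
  by apply: natext_in; left; exists k, B1.
exact: (dprod_nf_marginal ne2 ne1 hBB2 hBB1 cD2 cD1 k_nf gk).
Qed.

Lemma lpr_dprod_cyl1 (f1 : T1 -> R) (B1 : set T1) (B2 : set T2) :
  gamble f1 -> BB2 B2 \/ B2 = setT ->
  lpr (dprod BB1 BB2 D1 D2) (cyl1 f1, cyl1s B1 `&` cyl2s B2) = lpr D1 (f1, B1).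
Proof.
move=> gf B2_ok; apply: eq_lpr => mu /=.
have -> : (fun x => (cyl1 f1 x - mu) * ind R (cyl1s B1 `&` cyl2s B2) x) =
    (fun x => (f1 x.1 - mu) * ind R B1 x.1 * ind R B2 x.2).
  by apply/funext => x; rewrite indI mulrA.
exact: dprod_marginal1 (gamble_cond _ _ gf) B2_ok.
Qed.

Lemma lpr_dprod_cyl2 (f2 : T2 -> R) (B2 : set T2) (B1 : set T1) :
  gamble f2 -> BB1 B1 \/ B1 = setT ->
  lpr (dprod BB1 BB2 D1 D2) (cyl2 f2, cyl2s B2 `&` cyl1s B1) = lpr D2 (f2, B2).
Proof.
move=> gf B1_ok; apply: eq_lpr => mu /=.
have -> : (fun x => (cyl2 f2 x - mu) * ind R (cyl2s B2 `&` cyl1s B1) x) =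
    (fun x => (f2 x.2 - mu) * ind R B2 x.2 * ind R B1 x.1).
  by apply/funext => x; rewrite indI mulrA.
exact: dprod_marginal2 (gamble_cond _ _ gf) B1_ok.
Qed.

End Product.

Section IndependentNaturalExtension.
Variables (R : realType) (T1 T2 : Type).
Hypotheses (ne1 : exists x : T1, True) (ne2 : exists x : T2, True).
Variables (BB1 : set (set T1)) (BB2 : set (set T2)).
Hypotheses (hBB1 : forall B, BB1 B -> B !=set0) (hBB2 : forall B, BB2 B -> B !=set0).
Variables (C1 : set ((T1 -> R) * set T1)) (C2 : set ((T2 -> R) * set T2)).
Hypotheses (hC1 : C1 `<=` @cond_domain R T1) (hC2 : C2 `<=` @cond_domain R T2).
Variables (P1 : (T1 -> R) * set T1 -> \bar R) (P2 : (T2 -> R) * set T2 -> \bar R).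
Hypotheses (hP1 : coherent_lpr C1 P1) (hP2 : coherent_lpr C2 P2).
Variable C : set ((T1 * T2 -> R) * set (T1 * T2)).
Hypotheses (hC : C `<=` @cond_domain R (T1 * T2)) (hCind : indep_domain BB1 BB2 C).
Hypotheses (hC1C : forall p, C1 p -> C (@cyl1 R T1 T2 p.1, @cyl1s T1 T2 p.2))
           (hC2C : forall p, C2 p -> C (@cyl2 R T1 T2 p.1, @cyl2s T1 T2 p.2)).

Let D := dprod BB1 BB2 (E_lpr C1 P1) (E_lpr C2 P2).

Lemma gamble_of_cyl1 (f : T1 -> R) B : C (cyl1 f, B) -> gamble f.
Proof. by move=> /hC[[M hM] _]; case: ne2 => x2 _; exists M => x1; exact: (hM (x1, x2)). Qed.

Lemma gamble_of_cyl2 (f : T2 -> R) B : C (cyl2 f, B) -> gamble f.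
Proof. by move=> /hC[[M hM] _]; case: ne1 => x1 _; exists M => x2; exact: (hM (x1, x2)). Qed.

Lemma dprod_indep_product : indep_product BB1 BB2 C1 C2 P1 P2 C (lpr D).
Proof.
have cE1 := E_lpr_coherent hC1 hP1; have cE2 := E_lpr_coherent hC2 hP2.
have lpr1 f1 B1 : gamble f1 -> lpr D (cyl1 f1, cyl1s B1) = lpr (E_lpr C1 P1) (f1, B1).
  by move=> gf; rewrite -[cyl1s B1]setIT -cyl2sT lpr_dprod_cyl1 //; right.
have lpr2 f2 B2 : gamble f2 -> lpr D (cyl2 f2, cyl2s B2) = lpr (E_lpr C2 P2) (f2, B2).
  by move=> gf; rewrite -[cyl2s B2]setIT -cyl1sT lpr_dprod_cyl2 //; right.
split; [split; [|split] | split].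
- by exists D; split => //; exact: dprod_coherent.
- move=> f1 B1 B2 /gamble_of_cyl1 gf B2_ok.
  by rewrite lpr1 // lpr_dprod_cyl1 //; left.
- move=> f2 B2 B1 /gamble_of_cyl2 gf B1_ok.
  by rewrite lpr2 // lpr_dprod_cyl2 //; left.
- by move=> [f B] /= C1fB; have [gf _] := hC1 C1fB; rewrite lpr1 // lpr_E_lpr.
- by move=> [f B] /= C2fB; have [gf _] := hC2 C2fB; rewrite lpr2 // lpr_E_lpr.
Qed.

Section IndependentProduct.
Variable P : (T1 * T2 -> R) * set (T1 * T2) -> \bar R.
Hypothesis IP : indep_product BB1 BB2 C1 C2 P1 P2 C P.

Lemma indep_product_cyl1 g E B2 : C1 (g, E) -> BB2 B2 \/ B2 = setT ->
  C (cyl1 g, cyl1s E `&` cyl2s B2) /\ P (cyl1 g, cyl1s E `&` cyl2s B2) = P1 (g, E).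
Proof.
have [[_ [EP1 _]] [PC1 _]] := IP; move=> C1gE; have CgE := hC1C C1gE.
case=> [B2_BB|->]; last by rewrite cyl2sT setIT; split; [exact: CgE | exact: (PC1 _ C1gE)].
split; first exact: (hCind.1 g E B2 (hC1 C1gE) B2_BB).1.
by rewrite -(EP1 g E B2 CgE B2_BB) (PC1 _ C1gE).
Qed.

Lemma indep_product_cyl2 g E B1 : C2 (g, E) -> BB1 B1 \/ B1 = setT ->
  C (cyl2 g, cyl2s E `&` cyl1s B1) /\ P (cyl2 g, cyl2s E `&` cyl1s B1) = P2 (g, E).
Proof.
have [[_ [_ EP2]] [_ PC2]] := IP; move=> C2gE; have CgE := hC2C C2gE.
case=> [B1_BB|->]; last by rewrite cyl1sT setIT; split; [exact: CgE | exact: (PC2 _ C2gE)].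
split; first exact: (hCind.2 g E B1 (hC2 C2gE) B1_BB).1.
by rewrite -(EP2 g E B1 CgE B1_BB) (PC2 _ C2gE).
Qed.

Lemma dprod_lpr_min p : C p -> (lpr D p <= P p)%E.
Proof.
have [[[Dw [cDw PDw]] _] _] := IP; move=> Cp; rewrite PDw //; apply: lpr_le.
have APw := A_lpr_sub cDw hC PDw; apply: (natext_sub cDw).
move=> _ [[f2 [B1 [Ef2 [B1_ok ->]]]]|[f1 [B2 [Ef1 [B2_ok ->]]]]].
- have [x1 B1x1] := cond_nonempty1 ne1 hBB1 B1_ok.
  have w_pos (x2 : T2) : exists2 x, x.2 = x2 & 0 < ind R B1 x.1.
    by exists (x1, x2); rewrite //= ind1 // ltr01.
  have AP2w : forall f, A_lpr C2 P2 f -> Dw (fun x => f x.2 * ind R B1 x.1).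
    move=> _ [g [E [mu [C2gE [muP ->]]]]]; have [Cg Pg] := indep_product_cyl2 C2gE B1_ok.
    apply: APw; exists (cyl2 g), (cyl2s E `&` cyl1s B1), mu; split=> //; split; first by rewrite Pg.
    by apply/funext => x; rewrite indI mulrA.
  exact: (natext_weighted_sub cDw (gamble_comp fst (gamble_ind _ _)) (fun x => ind_ge0 _ _ _)
    w_pos AP2w Ef2).
- have [x2 B2x2] := cond_nonempty2 ne2 hBB2 B2_ok.
  have w_pos (x1 : T1) : exists2 x, x.1 = x1 & 0 < ind R B2 x.2.
    by exists (x1, x2); rewrite //= ind1 // ltr01.
  have AP1w : forall f, A_lpr C1 P1 f -> Dw (fun x => f x.1 * ind R B2 x.2).
    move=> _ [g [E [mu [C1gE [muP ->]]]]]; have [Cg Pg] := indep_product_cyl1 C1gE B2_ok.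
    apply: APw; exists (cyl1 g), (cyl1s E `&` cyl2s B2), mu; split=> //; split; first by rewrite Pg.
    by apply/funext => x; rewrite indI mulrA.
  exact: (natext_weighted_sub cDw (gamble_comp snd (gamble_ind _ _)) (fun x => ind_ge0 _ _ _)
    w_pos AP1w Ef1).
Qed.

End IndependentProduct.

End IndependentNaturalExtension.

Theorem theorem19 (R : realType) (T1 T2 : Type)
  (ne1 : exists x : T1, True) (ne2 : exists x : T2, True)
  (BB1 : set (set T1)) (BB2 : set (set T2))
  (hBB1 : forall B, BB1 B -> B !=set0) (hBB2 : forall B, BB2 B -> B !=set0)
  (C1 : set ((T1 -> R) * set T1)) (C2 : set ((T2 -> R) * set T2))
  (hC1 : C1 `<=` @cond_domain R T1) (hC2 : C2 `<=` @cond_domain R T2)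
  (P1 : (T1 -> R) * set T1 -> \bar R) (P2 : (T2 -> R) * set T2 -> \bar R)
  (hP1 : coherent_lpr C1 P1) (hP2 : coherent_lpr C2 P2)
  (C : set ((T1 * T2 -> R) * set (T1 * T2)))
  (hC : C `<=` @cond_domain R (T1 * T2))
  (hCind : indep_domain BB1 BB2 C)
  (hC1C : forall p, C1 p -> C (@cyl1 R T1 T2 p.1, @cyl1s T1 T2 p.2))
  (hC2C : forall p, C2 p -> C (@cyl2 R T1 T2 p.1, @cyl2s T1 T2 p.2)) :
  let Pprod := lpr (dprod BB1 BB2 (E_lpr C1 P1) (E_lpr C2 P2)) in
  indep_natext BB1 BB2 C1 C2 P1 P2 C Pprod /\
  (forall Q, indep_natext BB1 BB2 C1 C2 P1 P2 C Q ->
     forall p, C p -> Q p = Pprod p).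
Proof.
move=> Pprod; rewrite {}/Pprod.
have IPprod := dprod_indep_product ne1 ne2 hBB1 hBB2 hC1 hC2 hP1 hP2 hC.
have Pprod_min := @dprod_lpr_min _ _ _ ne1 ne2 _ _ hBB1 hBB2 _ _ hC1 hC2 P1 P2 _ hC hCind hC1C hC2C.
split; first by split.
move=> Q [IPQ Q_min] p Cp; apply/le_anti/andP; split; first exact: Q_min.
exact: Pprod_min.
Qed.
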